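(* Let $W$ be a matrix weight. For all $J\in\mathcal{D}$ and $1\le j\le d$, \[ \|W(J_-)^{1/2}h_J^{W,j}(J_-)\|_{\mathbb{C}^d}\le C(d),\qquad \|W(J_+)^{1/2}h_J^{W,j}(J_+)\|_{\mathbb{C}^d}\le C(d), \] where $C(d)$ depends only on $d$ and $h_J^{W,j}(J_\pm)$ denotes the constant value of $h_J^{W,j}$ on $J_\pm$.
   Context: A matrix weight is a $d\times d$ matrix-valued function on $\mathbb{R}$, positive definite a.e., with locally integrable entries. $\mathcal{D}$ is the standard dyadic grid, $J_\pm$ the right/left halves of $J$, $W(J)=\int_JW$. For $J\in\mathcal{D}$ let $v_J^1,\dots,v_J^d$ be an orthonormal eigenbasis of the positive definite matrix $W(J)W(J_+)^{-1}W(J_-)=W(J_-)W(J_+)^{-1}W(J_-)+W(J_-)$, $w_J^j=\|(W(J)W(J_+)^{-1}W(J_-))^{1/2}v_J^j\|$, and $h_J^{W,j}=(w_J^j)^{-1}\big(W(J_+)^{-1}W(J_-)v_J^j\mathbf{1}_{J_+}-v_J^j\mathbf{1}_{J_-}\big)$. *)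

(* Complex scalars: an arbitrary numClosedFieldType F
   (C-like: algebraically closed, with conjugation and order on reals). *)
From HB Require Import structures.
From mathcomp Require Import all_boot all_order all_algebra.
Set Implicit Arguments. Unset Strict Implicit. Unset Printing Implicit Defensive.
Import Order.TTheory GRing.Theory Num.Theory.
Local Open Scope ring_scope.
Local Open Scope sesquilinear_scope.

Section Defs.
Variables (F : numClosedFieldType) (d : nat).

Definition adj {m n} (A : 'M[F]_(m, n)) : 'M[F]_(n, m) := A ^t* .

Definition posdef (A : 'M[F]_d) : Prop :=
  A \is hermsymmx /\ forall x : 'cV[F]_d, x != 0 -> 0 < (adj x *m A *m x) 0 0.
Definition possemidef (A : 'M[F]_d) : Prop :=
  A \is hermsymmx /\ forall x : 'cV[F]_d, 0 <= (adj x *m A *m x) 0 0.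

Definition is_sqrtm (S A : 'M[F]_d) : Prop := possemidef S /\ S *m S = A.

Definition vnorm (x : 'cV[F]_d) : F := sqrtC (\sum_i `|x i 0| ^+ 2).
Definition inner (u v : 'cV[F]_d) : F := (adj u *m v) 0 0.

(* Dyadic intervals: (n, k) stands for J = [k 2^-n, (k+1) 2^-n).
   Children: J_- = (n+1, 2k), J_+ = (n+1, 2k+1). *)
Definition dyad := (int * int)%type.
Definition dleft (J : dyad) : dyad := (J.1 + 1, 2 * J.2).
Definition dright (J : dyad) : dyad := (J.1 + 1, 2 * J.2 + 1).

(* A matrix weight seen through its integrals W(J) = \int_J W over dyadic
   intervals: positive definite, and additive: W(J) = W(J_-) + W(J_+). *)
Definition dyadic_weight (W : dyad -> 'M[F]_d) : Prop :=
  forall J, posdef (W J) /\ W J = W (dleft J) + W (dright J).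

Definition Mmat (W : dyad -> 'M[F]_d) (J : dyad) : 'M[F]_d :=
  W J *m invmx (W (dright J)) *m W (dleft J).

Definition orthonormal_eigenbasis (M : 'M[F]_d) (v : 'I_d -> 'cV[F]_d) : Prop :=
  (forall i j, inner (v i) (v j) = (i == j)%:R) /\
  (forall j, exists lam : F, M *m v j = lam *: v j).

(* values of h_J^{W,j} on J_+ and on J_-, with w = w_J^j *)
Definition haar_plus (W : dyad -> 'M[F]_d) (J : dyad) (w : F) (vj : 'cV[F]_d) :=
  w^-1 *: (invmx (W (dright J)) *m W (dleft J) *m vj).
Definition haar_minus (w : F) (vj : 'cV[F]_d) : 'cV[F]_d := w^-1 *: (- vj).

End Defs.

From HB Require Import structures.
From mathcomp Require Import all_boot all_order all_algebra.
Import Order.TTheory GRing.Theory Num.Theory.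
Local Open Scope ring_scope.

Set Implicit Arguments.
Unset Strict Implicit.

(* Write A = W(J_-), B = W(J_+), x = v_J^j and y = B^-1 A x.  Since
   W(J) = A + B, the quadratic form of W(J) B^-1 A at x splits as
   x^* A x + y^* B y, so w^2 = x^* A x + y^* B y.  Up to sign the two Haar
   values are x / w and y / w, whose squared weighted norms are therefore
   x^* A x / w^2 <= 1 and y^* B y / w^2 <= 1: the bound holds with C(d) = 1,
   for every vector x, eigenvector or not. *)

Section QuadraticForm.
Variables (F : numClosedFieldType) (d : nat).
Implicit Types (A B S : 'M[F]_d) (x : 'cV[F]_d).

Definition qform A x : F := (adj x *m A *m x) 0 0.

Lemma adjM m n p (A : 'M[F]_(m, n)) (B : 'M[F]_(n, p)) :
  adj (A *m B) = adj B *m adj A.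
Proof. by rewrite /adj trmx_mul map_mxM. Qed.

Lemma adjK m n (A : 'M[F]_(m, n)) : adj (adj A) = A.
Proof. by apply/matrixP => i j; rewrite !mxE conjCK. Qed.

Lemma adjZ m n c (A : 'M[F]_(m, n)) : adj (c *: A) = c^* *: adj A.
Proof. by apply/matrixP => i j; rewrite !mxE rmorphM. Qed.

Lemma adjN m n (A : 'M[F]_(m, n)) : adj (- A) = - adj A.
Proof. by apply/matrixP => i j; rewrite !mxE rmorphN. Qed.

Lemma hermsymmx_adj A : A \is hermsymmx -> adj A = A.
Proof. by move/is_hermitianmxP => {2}->; rewrite expr0 scale1r. Qed.

Lemma qformZ A c x : qform A (c *: x) = `|c| ^+ 2 * qform A x.
Proof. by rewrite /qform adjZ -!scalemxAl -scalemxAr !mxE normCKC mulrA. Qed.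

Lemma qformN A x : qform A (- x) = qform A x.
Proof. by rewrite /qform adjN mulNmx mulmxN mulNmx opprK. Qed.

Lemma vnorm_ge0 x : 0 <= vnorm x.
Proof. by rewrite sqrtC_ge0 sumr_ge0 // => i _; rewrite exprn_ge0. Qed.

Lemma vnorm_sqr x : vnorm x ^+ 2 = (adj x *m x) 0 0.
Proof.
by rewrite /vnorm sqrtCK !mxE; apply: eq_bigr => i _; rewrite !mxE normCK mulrC.
Qed.

Lemma sqrtm_vnorm_sqr S A x : is_sqrtm S A -> vnorm (S *m x) ^+ 2 = qform A x.
Proof.
by move=> [[S_herm _] <-]; rewrite vnorm_sqr adjM hermsymmx_adj // /qform !mulmxA.
Qed.

Lemma sqrtm_qform_ge0 S A x : is_sqrtm S A -> 0 <= qform A x.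
Proof. by move=> sqrtS; rewrite -(sqrtm_vnorm_sqr x sqrtS) exprn_ge0 ?vnorm_ge0. Qed.

Lemma sqrtm_vnorm_scale_le1 S A x (w : F) : is_sqrtm S A ->
  0 <= w -> qform A x <= w ^+ 2 -> vnorm (S *m (w^-1 *: x)) <= 1.
Proof.
move=> sqrtS w_ge0 qx_le; rewrite -(expr_le1 (_ : 0 < 2)%N) ?vnorm_ge0 //.
rewrite (sqrtm_vnorm_sqr _ sqrtS) qformZ ger0_norm ?invr_ge0 // exprVn.
have [->|w_neq0] := eqVneq w 0; first by rewrite expr0n invr0 mul0r ler01.
by rewrite mulrC ler_pdivrMr ?exprn_gt0 ?lt_def ?w_neq0 // mul1r.
Qed.

Lemma posdef_unitmx B : posdef B -> B \in unitmx.
Proof.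
move=> [_ B_pos]; rewrite unitmxE unitfE; apply/negP => /det0P [u u_neq0 uB].
have adju_neq0 : adj u != 0.
  apply: contra u_neq0 => /eqP adju0; rewrite -[u]adjK adju0.
  by apply/eqP/matrixP => i j; rewrite !mxE rmorph0.
by have := B_pos _ adju_neq0; rewrite adjK uB mul0mx mxE ltxx.
Qed.

(* Both sides equal x^* A x + x^* A B^-1 A x, using B y = A x. *)
Lemma qform_sum_invmx_mul A B x :
  A \is hermsymmx -> B \is hermsymmx -> B \in unitmx ->
  qform ((A + B) *m invmx B *m A) x = qform A x + qform B (invmx B *m A *m x).
Proof.
move=> A_herm B_herm B_unit; set y := invmx B *m A *m x.
have By : B *m y = A *m x by rewrite /y -mulmxA mulKVmx.
rewrite /qform -!mulmxA [invmx B *m _]mulmxA -/y mulmxDl By mulmxDr addrC mxE.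
congr (_ + _ : F).
rewrite mulmxA -{1}(hermsymmx_adj A_herm) -adjM -By adjM.
by rewrite hermsymmx_adj // -mulmxA By.
Qed.

End QuadraticForm.

Theorem lemma2p3 :
  forall d : nat, exists C : nat,
  forall (F : numClosedFieldType) (W : dyad -> 'M[F]_d),
  dyadic_weight W ->
  forall (J : dyad) (v : 'I_d -> 'cV[F]_d),
  orthonormal_eigenbasis (Mmat W J) v ->
  forall (SM Sm Sp : 'M[F]_d),
  is_sqrtm SM (Mmat W J) ->
  is_sqrtm Sm (W (dleft J)) ->
  is_sqrtm Sp (W (dright J)) ->
  forall j : 'I_d,
  let w := vnorm (SM *m v j) in
  vnorm (Sm *m haar_minus w (v j)) <= C%:R /\
  vnorm (Sp *m haar_plus W J w (v j)) <= C%:R.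
Proof.
move=> d; exists 1%N => F W W_weight J v _ SM Sm Sp sqrtM sqrtA sqrtB j w.
set A := W (dleft J); set B := W (dright J); set x := v j.
have [[A_herm _] _] := W_weight (dleft J).
have [[B_herm _] _] := W_weight (dright J).
have [_ WJ_split] := W_weight J.
have B_unit := posdef_unitmx (proj1 (W_weight (dright J))).
have w_sqr : w ^+ 2 = qform A x + qform B (invmx B *m A *m x).
  by rewrite (sqrtm_vnorm_sqr _ sqrtM) /Mmat WJ_split qform_sum_invmx_mul.
split.
- apply: (sqrtm_vnorm_scale_le1 sqrtA); first exact: vnorm_ge0.
  by rewrite qformN w_sqr lerDl (sqrtm_qform_ge0 _ sqrtB).
- apply: (sqrtm_vnorm_scale_le1 sqrtB); first exact: vnorm_ge0.
  by rewrite w_sqr lerDr (sqrtm_qform_ge0 _ sqrtA).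
Qed.
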